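(* Let $c_1,\dots,c_r\in K^\times$. For $1\le s\le r$ let $f_s=(\tau+c_s)(\tau+c_{s-1})\cdots(\tau+c_1)\in K\{\tau\}$ and $W_s=\{\lambda\in K^{\rm sep}: f_s(\lambda)=0\}$. Then $0=W_0\subset W_1\subset\cdots\subset W_r$ are $G_K$-stable $\mathbb{F}_q$-subspaces with $\dim W_s=s$, and the representation $\bar\rho:G_K\to\mathrm{GL}_{\mathbb{F}_q}(W_r)\cong\mathrm{GL}_r(\mathbb{F}_q)$ is isomorphic to an upper triangular representation with diagonal characters $\kappa_{(-c_1)},\kappa_{(-c_2)},\dots,\kappa_{(-c_r)}$.
   Context: $p$ prime, $q$ a power of $p$, $F=\mathbb{F}_q(t)$, $K$ a finite extension of $F$. $K\{\tau\}$ is the twisted polynomial ring with $\tau c=c^q\tau$, acting on $K^{\rm sep}$ with $\tau$ the $q$-th power map. For $c\in K^\times$, $\kappa_{(c)}:G_K\to\mathbb{F}_q^\times$ is the Kummer character $\sigma\mapsto\sigma(\lambda)/\lambda$ for any $\lambda\in K^{\rm sep}$ with $\lambda^{q-1}=c$ (i.e. the character corresponding to the class of $c$ under $K^\times/(K^\times)^{q-1}\cong\mathrm{Hom}(G_K,\mathbb{F}_q^\times)$). *)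

From HB Require Import structures.
From mathcomp Require Import all_boot all_order all_algebra.
From mathcomp Require Import fraction vector falgebra fieldext separable.
From Stdlib Require Import ClassicalEpsilon.
Set Implicit Arguments. Unset Strict Implicit. Unset Printing Implicit Defensive.
Import GRing.Theory.
Local Open Scope ring_scope.

Definition Fqt (Fq : finFieldType) := {fraction {poly Fq}}.

Section Defs.
Variables (Fq : finFieldType) (K : fieldExtType (Fqt Fq)) (L : fieldType).
Variable iota : {rmorphism K -> L}.

Definition qq : nat := #|Fq|.

Definition embFq (a : Fq) : L := iota ((tofrac (a%:P)) %:A).

Definition is_sep_closure : Prop :=
  (forall x : L, exists p : {poly K},
      [/\ p != 0, separable_poly p & root (map_poly iota p) x]) /\
  (forall p : {poly K}, separable_poly p ->
      exists rs : seq L,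
        map_poly iota p = (iota (lead_coef p))%:P * \prod_(x <- rs) ('X - x%:P)).

Definition in_GK (sigma : {rmorphism L -> L}) : Prop :=
  bijective sigma /\ forall x : K, sigma (iota x) = iota x.

Definition tau_plus (a : L) (x : L) : L := x ^+ qq + a * x.

Fixpoint f_act (c : nat -> K) (s : nat) (x : L) : L :=
  match s with
  | 0 => x
  | s'.+1 => tau_plus (iota (c s)) (f_act c s' x)
  end.

Definition Wsp (c : nat -> K) (s : nat) : pred L := fun x => f_act c s x == 0.

Definition Fq_comb (n : nat) (a : 'I_n -> Fq) (w : 'I_n -> L) : L :=
  \sum_(i < n) embFq (a i) * w i.

Definition Fq_subspace (W : pred L) : Prop :=
  [/\ 0 \in W, (forall x y, x \in W -> y \in W -> x + y \in W)
    & forall (a : Fq) x, x \in W -> embFq a * x \in W].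

Definition GK_stable (W : pred L) : Prop :=
  forall sigma : {rmorphism L -> L}, in_GK sigma ->
    forall x, x \in W -> sigma x \in W.

Definition Fq_basis (W : pred L) (n : nat) (w : 'I_n -> L) : Prop :=
  [/\ forall i, w i \in W,
      (forall a : 'I_n -> Fq, Fq_comb a w = 0 -> forall i, a i = 0)
    & forall x, x \in W -> exists a : 'I_n -> Fq, x = Fq_comb a w].

Definition Fq_dim (W : pred L) (n : nat) : Prop :=
  exists w : 'I_n -> L, Fq_basis W w.

Definition kummer (d : L) (sigma : L -> L) : L :=
  let lam := epsilon (inhabits (0 : L)) (fun l : L => l ^+ qq.-1 = d) in
  sigma lam / lam.

End Defs.

From HB Require Import structures.
From mathcomp Require Import all_boot all_order all_algebra fingroup cyclic.
From mathcomp Require Import fraction vector falgebra fieldext separable finfield.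
From Stdlib Require Import ClassicalEpsilon.

(* Each factor tau + c is additive and commutes with the scalars of F_q, so
   every f_s is F_q-linear and commutes with G_K; hence the W_s form a
   G_K-stable flag of F_q-subspaces.  As a polynomial, f_s is monic of degree
   q^s with constant derivative c_1 ... c_s <> 0, so it is separable and has
   q^s distinct roots in K^sep; thus W_s <> W_(s+1), and we pick
   w_s in W_(s+1) \ W_s.  Then mu = f_s(w_s) is a nonzero root of
   X^q + c_(s+1) X, whose roots are exactly the F_q-multiples of mu (their
   ratios are fixed by Frobenius).  Peeling off f_s(x) = b mu shows that
   w_0, ..., w_(s-1) is a basis of W_s.  Since sigma(mu) is again a root and
   mu^(q-1) = -c_(s+1), sigma(mu) = kappa_(-c_(s+1))(sigma) mu, so
   sigma(w_s) - kappa_(-c_(s+1))(sigma) w_s lies in W_s. *)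

Set Implicit Arguments. Unset Strict Implicit. Unset Printing Implicit Defensive.
Import GRing.Theory.
Local Open Scope ring_scope.

Lemma finField_natr_card (F : finFieldType) : #|F|%:R = 0 :> F.
Proof. by rewrite -cardsT -FinRing.zmodXgE expg_cardG ?inE. Qed.

Lemma finField_pchar_nat_card (F : finFieldType) : [pchar F].-nat #|F|.
Proof.
have [p p_pr pF] := finPcharP F.
by rewrite (eq_pnat _ (pcharf_eq pF)) (card_pprimeChar pF) pnatX pnat_id.
Qed.

Section FiniteSubfield.
Variables (F : finFieldType) (L : fieldType) (e : {rmorphism F -> L}).
Local Notation q := #|F|.

Lemma expr_cardD (x y : L) : (x + y) ^+ q = x ^+ q + y ^+ q.
Proof. by apply: exprDn_pchar; rewrite (eq_pnat _ (fmorph_pchar e)) finField_pchar_nat_card. Qed.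

Lemma rmorph_expr_card a : e a ^+ q = e a.
Proof. by rewrite -rmorphXn expf_card. Qed.

Lemma expr_card_fixed (x : L) : x ^+ q = x -> exists a, x = e a.
Proof.
move=> xq; have [[a _ ->]|x_new] := altP (@mapP _ _ e (enum F) x); first by exists a.
have size_XqX : size ('X^q - 'X : {poly L}) = q.+1.
  by rewrite size_polyDl ?size_polyXn // size_polyN size_polyX ltnS finNzRing_gt1.
have : (size (x :: map e (enum F)) < size ('X^q - 'X : {poly L})%R)%N.
  apply: max_poly_roots; first by rewrite -size_poly_eq0 size_XqX.
    apply/allP => z; rewrite inE => /predU1P[-> | /mapP[a _ ->]];
    by rewrite rootE !hornerE ?xq ?rmorph_expr_card subrr.
  by rewrite /= (map_inj_uniq (fmorph_inj e)) enum_uniq x_new.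
by rewrite size_XqX /= size_map -cardE ltnn.
Qed.

Lemma root_XqcX_ratio (c y mu : L) : c != 0 -> mu != 0 ->
  y ^+ q + c * y = 0 -> mu ^+ q + c * mu = 0 -> exists b, y = e b * mu.
Proof.
move=> c_neq0 mu_neq0 /eqP; rewrite addr_eq0 => /eqP yq /eqP; rewrite addr_eq0 => /eqP muq.
have [b ratio_b] : exists b, y / mu = e b.
  apply: expr_card_fixed.
  by rewrite expr_div_n yq muq invrN mulrNN invfM mulrACA divff // mul1r.
by exists b; rewrite -ratio_b divfK.
Qed.

Lemma root_XqcX_expr_pred (c l : L) : l != 0 ->
  l ^+ q + c * l = 0 <-> l ^+ q.-1 = - c.
Proof.
move=> l_neq0; rewrite -(prednK (ltnW (finNzRing_gt1 F))) exprSr -mulrDl /=.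
split=> [/eqP | ->]; last by rewrite addNr mul0r.
by rewrite mulf_eq0 (negbTE l_neq0) orbF addr_eq0 => /eqP.
Qed.

Lemma kummer_root_XqcX (sigma : {rmorphism L -> L}) (c mu : L) :
  (forall a, sigma (e a) = e a) -> c != 0 -> mu != 0 -> mu ^+ q + c * mu = 0 ->
  kummer F (- c) sigma = sigma mu / mu.
Proof.
move=> sigma_e c_neq0 mu_neq0 mu_root; rewrite /kummer /qq.
set P := fun l : L => l ^+ q.-1 = - c.
have : P (epsilon (inhabits 0) P).
  by apply: epsilon_spec; exists mu; apply/root_XqcX_expr_pred.
set lam := epsilon _ P => lam_pow.
have lam_neq0 : lam != 0.
  apply: contra_eqN lam_pow => /eqP ->.
  by rewrite expr0n -subn1 subn_eq0 leqNgt finNzRing_gt1 eq_sym oppr_eq0.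
have lam_root := proj2 (root_XqcX_expr_pred c lam_neq0) lam_pow.
have [b lamE] := root_XqcX_ratio c_neq0 mu_neq0 lam_root mu_root.
have eb_neq0 : e b != 0 by apply: contraNneq lam_neq0 => eb0; rewrite lamE eb0 mul0r.
by rewrite lamE rmorphM sigma_e invfM mulrACA divff // mul1r.
Qed.

End FiniteSubfield.

Section TwistedPolynomial.
Variables (Fq : finFieldType) (K : fieldExtType (Fqt Fq)) (L : fieldType).
Variables (iota : {rmorphism K -> L}) (c : nat -> K).
Local Notation q := (qq Fq).
Local Notation f := (f_act iota c).

HB.instance Definition _ :=
  GRing.RMorphism.copy (embFq iota) (iota \o in_alg K \o @tofrac _ \o polyC).

Local Notation embR := (embFq iota : {rmorphism Fq -> L}).

Lemma f_actS s x : f s.+1 x = f s x ^+ q + iota (c s.+1) * f s x.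
Proof. by []. Qed.

Lemma f_actD s x y : f s (x + y) = f s x + f s y.
Proof.
elim: s => [|s IH] //.
by rewrite !f_actS IH (expr_cardD embR) mulrDr addrACA.
Qed.

Lemma f_actB s : zmod_morphism (f s).
Proof. by move=> x y; apply/eqP; rewrite eq_sym subr_eq -f_actD subrK. Qed.

HB.instance Definition _ s := GRing.isZmodMorphism.Build L L (f s) (f_actB s).

Lemma f_actZ s a x : f s (embFq iota a * x) = embFq iota a * f s x.
Proof.
elim: s => [|s IH] //.
by rewrite !f_actS IH exprMn rmorph_expr_card mulrDr mulrCA.
Qed.

Lemma f_act_comb s n (a : nat -> Fq) (w : nat -> L) :
  f s (\sum_(i < n) embFq iota (a i) * w i) =
  \sum_(i < n) embFq iota (a i) * f s (w i).
Proof. by rewrite raddf_sum; apply: eq_bigr => i _ /=; rewrite f_actZ. Qed.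

Lemma f_act_rmorph (sigma : {rmorphism L -> L}) s x :
  (forall k, sigma (iota k) = iota k) -> sigma (f s x) = f s (sigma x).
Proof.
move=> sigma_iota; elim: s => [|s IH] //.
by rewrite !f_actS rmorphD rmorphM rmorphXn IH sigma_iota.
Qed.

Lemma f_act_eq0_le s t x : (s <= t)%N -> f s x = 0 -> f t x = 0.
Proof.
move=> /subnK <-; elim: (t - s)%N => [|n IH] // fx0.
by rewrite addSn f_actS IH // expr0n gtn_eqF ?mulr0 ?addr0 // ltnW ?finNzRing_gt1.
Qed.

Fixpoint f_poly s : {poly K} :=
  if s is s'.+1 then f_poly s' ^+ q + (c s)%:P * f_poly s' else 'X.

Lemma horner_f_poly s x : (map_poly iota (f_poly s)).[x] = f s x.
Proof.
elim: s => [|s IH] /=; first by rewrite map_polyX hornerX.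
by rewrite rmorphD rmorphM rmorphXn /= map_polyC hornerD hornerM horner_exp hornerC IH.
Qed.

Lemma size_polyC_mul_lt_pow (k : K) (p : {poly K}) :
  (1 < size p)%N -> (size (k%:P * p)%R < size (p ^+ q)%R)%N.
Proof.
move=> p_gt1; rewrite mul_polyC; apply: leq_ltn_trans (size_scale_leq k p) _.
have pq_gt0 : (0 < size (p ^+ q))%N.
  by rewrite size_poly_gt0 expf_neq0 // -size_poly_gt0 ltnW.
rewrite -(prednK (ltnW p_gt1)) -(prednK pq_gt0) size_exp ltnS.
by rewrite ltn_Pmulr ?finNzRing_gt1 // -ltnS prednK // ltnW.
Qed.

Lemma size_f_poly s : size (f_poly s) = (q ^ s).+1.
Proof.
elim: s => [|s IH]; first by rewrite size_polyX.
have f_poly_gt1 : (1 < size (f_poly s))%N by rewrite IH ltnS expn_gt0 ltnW ?finNzRing_gt1.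
rewrite [f_poly _]/= size_polyDl ?size_polyC_mul_lt_pow //.
rewrite -[LHS]prednK ?size_exp ?IH ?expnSr // size_poly_gt0 expf_neq0 //.
by rewrite -size_poly_gt0 ltnW.
Qed.

Lemma f_poly_monic s : f_poly s \is monic.
Proof.
elim: s => [|s IH]; first exact: monicX.
have f_poly_gt1 : (1 < size (f_poly s))%N by rewrite size_f_poly ltnS expn_gt0 ltnW ?finNzRing_gt1.
by rewrite [f_poly _]/= monicE lead_coefDl ?size_polyC_mul_lt_pow // -monicE monic_exp.
Qed.

Lemma deriv_f_poly s : (f_poly s)^`() = (\prod_(1 <= i < s.+1) c i)%:P.
Proof.
elim: s => [|s IH]; first by rewrite derivX big_geq.
have q_eq0 : (q%:R : {poly K}) = 0.
  rewrite -(rmorph_nat (polyC \o in_alg K \o @tofrac _ \o polyC) q).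
  by rewrite /qq finField_natr_card rmorph0.
rewrite [f_poly _]/= derivD deriv_exp deriv_mulC -mulr_natr q_eq0 mulr0 add0r IH.
by rewrite [in RHS]big_nat_recr //= -polyCM mulrC.
Qed.

Lemma f_poly_separable s :
  (forall i, (1 <= i <= s)%N -> c i != 0) -> separable_poly (f_poly s).
Proof.
move=> c_neq0; rewrite unlock deriv_f_poly -alg_polyC coprimepZr ?coprimep1 //.
rewrite prodf_seq_neq0; apply/allP => i; rewrite mem_index_iota ltnS => i_range.
exact: c_neq0.
Qed.

Lemma f_act_kernel_grows s : is_sep_closure iota ->
  (forall i, (1 <= i <= s.+1)%N -> c i != 0) ->
  exists x, f s x != 0 /\ f s.+1 x = 0.
Proof.
move=> [_ split_sep] c_neq0; have sep := f_poly_separable c_neq0.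
have [rs] := split_sep _ sep; rewrite (monicP (f_poly_monic _)) rmorph1 mul1r => rsE.
have rs_uniq : uniq rs by rewrite -separable_prod_XsubC -rsE separable_map.
have size_rs : size rs = (q ^ s.+1)%N.
  by have := size_prod_XsubC rs id; rewrite -rsE size_map_poly size_f_poly => -[].
have [/allP rs_ker | /allPn[x x_rs fx_neq0]] := boolP (all (fun x => f s x == 0) rs).
  have f_poly_neq0 : map_poly iota (f_poly s) != 0.
    by rewrite -size_poly_eq0 size_map_poly size_f_poly.
  suff : (size rs < size (map_poly iota (f_poly s)))%N.
    by rewrite size_map_poly size_f_poly size_rs ltnS leqNgt ltn_exp2l ?finNzRing_gt1 ?ltnSn.
  apply: max_poly_roots => //.
  by apply/allP => x /rs_ker; rewrite /root horner_f_poly.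
exists x; split=> //; apply/eqP.
by rewrite -horner_f_poly rsE -/(root _ x) root_prod_XsubC.
Qed.

Lemma mem_Wsp s x : (x \in Wsp iota c s) = (f s x == 0).
Proof. by []. Qed.

Lemma Wsp_subset s t : (s <= t)%N -> {subset Wsp iota c s <= Wsp iota c t}.
Proof. by move=> le_st x; rewrite !mem_Wsp => /eqP fx0; rewrite (f_act_eq0_le le_st fx0). Qed.

Lemma Fq_subspace_Wsp s : Fq_subspace iota (Wsp iota c s).
Proof.
split=> [|x y|a x]; rewrite !mem_Wsp ?raddf0 //.
  by rewrite raddfD /= => /eqP-> /eqP->; rewrite addr0.
by rewrite f_actZ => /eqP->; rewrite mulr0.
Qed.

Lemma GK_stable_Wsp s : GK_stable iota (Wsp iota c s).
Proof.
by move=> sigma [_ sigma_iota] x; rewrite !mem_Wsp -f_act_rmorph // => /eqP->; rewrite rmorph0.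
Qed.

Lemma Fq_comb_extend n m (a : nat -> Fq) (w : nat -> L) : (n <= m)%N ->
  exists a' : 'I_m -> Fq, (forall i : 'I_m, (n <= i)%N -> a' i = 0) /\
    Fq_comb iota a' (fun i : 'I_m => w i) = \sum_(i < n) embFq iota (a i) * w i.
Proof.
move=> le_nm; exists (fun i : 'I_m => if (i < n)%N then a i else 0); split.
  by move=> i; rewrite ltnNge => ->.
rewrite /Fq_comb (big_ord_widen m (fun i => embFq iota (a i) * w i) le_nm) [RHS]big_mkcond.
apply: eq_bigr => i _ /=.
by case: ifP; rewrite ?rmorph0 ?mul0r.
Qed.

(* Junk for i >= r, where W_(i+1) \ W_i may be empty. *)
Definition flag_basis i : L :=
  epsilon (inhabits 0) (fun x => f i x != 0 /\ f i.+1 x = 0).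

Variable r : nat.
Hypothesis sep_closure : is_sep_closure iota.
Hypothesis c_neq0 : forall i, (1 <= i <= r)%N -> c i != 0.

Lemma flag_basis_spec i : (i < r)%N ->
  f i (flag_basis i) != 0 /\ f i.+1 (flag_basis i) = 0.
Proof.
move=> lt_ir; apply: (epsilon_spec _ (fun x => f i x != 0 /\ f i.+1 x = 0)).
apply: f_act_kernel_grows => // k /andP[k_ge1 k_le].
by apply: c_neq0; rewrite k_ge1 (leq_trans k_le).
Qed.

Lemma f_act_flag_basis i t : (i < r)%N -> (i < t)%N -> f t (flag_basis i) = 0.
Proof. by move=> lt_ir lt_it; apply: f_act_eq0_le lt_it (flag_basis_spec lt_ir).2. Qed.

Lemma flag_basis_free t (a : nat -> Fq) : (t <= r)%N ->
  \sum_(i < t) embFq iota (a i) * flag_basis i = 0 -> forall i, (i < t)%N -> a i = 0.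
Proof.
elim: t => [|t IH] // le_tr; rewrite big_ord_recr /= => comb_eq0.
have a_t : a t = 0.
  have := congr1 (f t) comb_eq0; rewrite raddfD /= f_act_comb f_actZ raddf0.
  rewrite big1 ?add0r => [/eqP|i _]; last first.
    by rewrite f_act_flag_basis ?mulr0 // (ltn_trans (ltn_ord i) le_tr).
  by rewrite mulf_eq0 (negbTE (flag_basis_spec le_tr).1) orbF fmorph_eq0 => /eqP.
move: comb_eq0; rewrite a_t rmorph0 mul0r addr0 => comb_eq0 i.
by rewrite ltnS leq_eqVlt => /predU1P[-> // | lt_it]; apply: IH (ltnW le_tr) comb_eq0 i lt_it.
Qed.

Lemma flag_basis_span t x : (t <= r)%N -> f t x = 0 ->
  exists a : nat -> Fq, x = \sum_(i < t) embFq iota (a i) * flag_basis i.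
Proof.
elim: t x => [|t IH] x le_tr fx0; first by exists (fun=> 0); rewrite big_ord0.
have [ft_neq0 ft1_eq0] := flag_basis_spec le_tr.
have c_t : iota (c t.+1) != 0 by rewrite fmorph_eq0 c_neq0.
have [b fxE] := root_XqcX_ratio embR c_t ft_neq0 fx0 ft1_eq0.
have [|a xE] := IH (x - embFq iota b * flag_basis t) (ltnW le_tr).
  by rewrite raddfB /= f_actZ -fxE subrr.
exists (fun i => if i == t then b else a i).
rewrite big_ord_recr /= eqxx -[LHS](subrK (embFq iota b * flag_basis t)) xE.
by congr (_ + _); apply: eq_bigr => i _; rewrite ifN // neq_ltn ltn_ord.
Qed.

Lemma Fq_basis_Wsp s : (s <= r)%N ->
  Fq_basis iota (Wsp iota c s) (fun i : 'I_s => flag_basis i).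
Proof.
move=> le_sr; split.
- move=> i; apply/eqP.
  exact: f_act_flag_basis (leq_trans (ltn_ord i) le_sr) (ltn_ord i).
- move=> a comb_eq0 i; pose a' k := if insub k is Some j then a j else 0.
  have := @flag_basis_free s a' le_sr _ i (ltn_ord i); rewrite /a' valK; apply.
  by rewrite -[RHS]comb_eq0; apply: eq_bigr => k _; rewrite valK.
- move=> x /eqP /(flag_basis_span le_sr)[a ->].
  by exists (fun i : 'I_s => a i).
Qed.

Lemma flag_basis_Galois (sigma : {rmorphism L -> L}) j :
  in_GK iota sigma -> (j < r)%N ->
  exists a : nat -> Fq, sigma (flag_basis j) =
    kummer Fq (iota (- c j.+1)) sigma * flag_basis j +
    \sum_(i < j) embFq iota (a i) * flag_basis i.
Proof.
move=> [_ sigma_iota] lt_jr.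
have [mu_neq0 mu_root] := flag_basis_spec lt_jr.
set mu := f j (flag_basis j) in mu_neq0 mu_root; rewrite f_actS -/mu in mu_root.
have c_j : iota (c j.+1) != 0 by rewrite fmorph_eq0 c_neq0.
have sigma_mu_root : sigma mu ^+ q + iota (c j.+1) * sigma mu = 0.
  by rewrite -rmorphXn -(sigma_iota (c j.+1)) -rmorphM -rmorphD mu_root rmorph0.
have [b sigma_muE] := root_XqcX_ratio embR c_j mu_neq0 sigma_mu_root mu_root.
have sigma_e a : sigma (embFq iota a) = embFq iota a by apply: sigma_iota.
have kummerE : kummer Fq (iota (- c j.+1)) sigma = embFq iota b.
  by rewrite rmorphN (kummer_root_XqcX sigma_e c_j mu_neq0 mu_root) sigma_muE mulfK.
set y := sigma (flag_basis j) - embFq iota b * flag_basis j.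
have [|a aE] := flag_basis_span (x := y) (ltnW lt_jr).
  by rewrite raddfB /= f_actZ -f_act_rmorph // -/mu sigma_muE subrr.
by exists a; rewrite kummerE -aE addrC subrK.
Qed.

End TwistedPolynomial.

Theorem lemma5p13 (Fq : finFieldType) (K : fieldExtType (Fqt Fq))
  (L : fieldType) (iota : {rmorphism K -> L})
  (HL : is_sep_closure iota)
  (r : nat) (c : nat -> K) (Hc : forall i, (1 <= i <= r)%N -> c i != 0) :
  (* 0 = W_0 *)
  (forall x : L, (x \in Wsp iota c 0) = (x == 0)) /\
  (* W_{s-1} ⊆ W_s, and each W_s is a G_K-stable F_q-subspace of dimension s *)
  (forall s : nat, (1 <= s <= r)%N ->
     {subset Wsp iota c s.-1 <= Wsp iota c s}) /\
  (forall s : nat, (s <= r)%N ->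
     [/\ Fq_subspace iota (Wsp iota c s), GK_stable iota (Wsp iota c s)
       & Fq_dim iota (Wsp iota c s) s]) /\
  (* upper triangular with diagonal characters kappa_(-c_1), ..., kappa_(-c_r) *)
  (exists w : 'I_r -> L,
     Fq_basis iota (Wsp iota c r) w /\
     forall sigma : {rmorphism L -> L}, in_GK iota sigma ->
       forall j : 'I_r, exists a : 'I_r -> Fq,
         (forall i : 'I_r, (j <= i)%N -> a i = 0) /\
         sigma (w j) = kummer Fq (iota (- c j.+1)) sigma * w j + Fq_comb iota a w).
Proof.
split; first by [].
split; first by move=> s _; apply/Wsp_subset/leq_pred.
split.
  move=> s le_sr; split; [exact: Fq_subspace_Wsp | exact: GK_stable_Wsp |].
  by exists (fun i : 'I_s => flag_basis iota c i); apply: Fq_basis_Wsp HL Hc _ le_sr.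
exists (fun i : 'I_r => flag_basis iota c i); split; first exact: Fq_basis_Wsp HL Hc _ (leqnn r).
move=> sigma sigma_GK j.
have [a sigma_wj] := flag_basis_Galois HL Hc sigma_GK (ltn_ord j).
have [a' [a'_vanish a'E]] := Fq_comb_extend iota a (flag_basis iota c) (ltnW (ltn_ord j)).
by exists a'; rewrite a'E.
Qed.
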